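(* Let $X$ be a Banach space and let $\Lambda\subset B_{X^*}$ be weak$^*$ compact with $\overline{\mathrm{co}}^{w^*}\Lambda=B_{X^*}$. If the dual norm is Fréchet differentiable at every $x^*\in\Lambda\cap S_{X^*}$, then $X^*$ is Fréchet smooth.
   Context: $B_{X^*}$ and $S_{X^*}$ are the closed unit ball and unit sphere of $X^*$; $\overline{\mathrm{co}}^{w^*}$ denotes the weak$^*$ closed convex hull. $X^*$ is Fréchet smooth if the dual norm is Fréchet differentiable at every nonzero point of $X^*$. *)

From HB Require Import structures.
From mathcomp Require Import all_boot all_order all_algebra.
From mathcomp Require Import all_classical all_reals all_analysis.
Set Implicit Arguments. Unset Strict Implicit. Unset Printing Implicit Defensive.
Import Order.TTheory GRing.Theory Num.Theory.
Import numFieldNormedType.Exports.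
Local Open Scope classical_set_scope.
Local Open Scope ring_scope.

Section Dual.
Variables (R : realType) (X : normedModType R).

Definition is_dual (f : X -> R) : Prop :=
  (forall (a : R) (x y : X), f (a *: x + y) = a * f x + f y) /\
  (exists M : R, forall x : X, `|f x| <= M * `|x|).

Definition dualsp : set (X -> R) := [set f | is_dual f].

Definition dual_norm (f : X -> R) : R :=
  sup [set `|f x| | x in [set x : X | `|x| <= 1]].

Definition dual_ball : set (X -> R) := [set f | is_dual f /\ dual_norm f <= 1].
Definition dual_sphere : set (X -> R) := [set f | is_dual f /\ dual_norm f = 1].

Definition conv_hull (A : set (X -> R)) : set (X -> R) :=
  [set f | exists (n : nat) (l : 'I_n -> R) (g : 'I_n -> X -> R),
      (forall i, 0 <= l i) /\ \sum_(i < n) l i = 1 /\ (forall i, A (g i)) /\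
      f = (fun x => \sum_(i < n) l i * g i x)].

(* The weak* topology on X^* is the subspace topology induced by the
   topology of pointwise convergence {ptws X -> R}. *)
Definition wstar_compact (A : set (X -> R)) : Prop :=
  A `<=` dualsp /\ @compact {ptws X -> R} A.

Definition wstar_closure (A : set (X -> R)) : set (X -> R) :=
  @closure {ptws X -> R} A `&` dualsp.

Definition dual_norm_frechet_at (f : X -> R) : Prop :=
  exists L : (X -> R) -> R,
    [/\ (forall (a : R) (h k : X -> R), dualsp h -> dualsp k ->
          L (fun x => a * h x + k x) = a * L h + L k),
        (exists M : R, forall h, dualsp h -> `|L h| <= M * dual_norm h) &
        (forall eps : R, 0 < eps -> exists2 delta : R, 0 < delta &
          forall h, dualsp h -> dual_norm h < delta ->
            `|dual_norm (fun x => f x + h x) - dual_norm f - L h|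
              <= eps * dual_norm h)].

Definition dual_frechet_smooth : Prop :=
  forall f, dualsp f -> f <> (fun _ => 0) -> dual_norm_frechet_at f.
End Dual.

(* Smulian's criterion: the dual norm is Frechet differentiable at [f] iff the
   slices [{x in B_X | f x > ||f|| - d}] have diameters (in the bidual norm)
   tending to 0; the derivative is then the weak* limit of any norming sequence
   of [f].  Suppose the slices of some [g] in [S_X*] stay [eps]-wide: pick pairs
   [x_n, z_n] in the slice of [g] of depth [sub_depth n], spread apart by
   [eps].  As [g] is a weak* limit of convex combinations of [Lam], counting
   mass shows that for each [K] some [lam_K] in [Lam] puts all [x_n, z_n] with
   [n < K] in its slice of depth [depth n].  A weak* cluster point [lam] in [Lam] of
   [(lam_K)] then has norm one and slices of every depth that are [eps]-wide,
   so the norm is not differentiable at [lam]. *)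

From mathcomp Require Import all_boot all_order all_algebra.
From mathcomp Require Import all_classical all_reals all_analysis.
From mathcomp Require Import ring lra.
Import Order.TTheory GRing.Theory Num.Theory.
Import numFieldNormedType.Exports.
Local Open Scope classical_set_scope.
Local Open Scope ring_scope.
Set Implicit Arguments. Unset Strict Implicit. Unset Printing Implicit Defensive.

Section DualNorm.
Variables (R : realType) (X : normedModType R).
Implicit Types (f g h : X -> R) (x y z : X).

Lemma dual_linear f : is_dual f -> forall a x y, f (a *: x + y) = a * f x + f y.
Proof. by case. Qed.

Lemma dual0 f : is_dual f -> f 0 = 0.
Proof.
move=> df; have := dual_linear df 1 0 0; rewrite scaler0 addr0 mul1r => h.
by apply/(addrI (f 0)); rewrite addr0 -h.
Qed.

Lemma dualZ f a x : is_dual f -> f (a *: x) = a * f x.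
Proof. by move=> df; have := dual_linear df a x 0; rewrite (dual0 df) !addr0. Qed.

Lemma dualN f x : is_dual f -> f (- x) = - f x.
Proof. by move=> df; rewrite -scaleN1r dualZ // mulN1r. Qed.

Lemma dual_bounded f : is_dual f ->
  exists M, 0 <= M /\ forall x, `|f x| <= M * `|x|.
Proof.
case=> _ [M HM]; exists `|M|; split => // x.
by apply: (le_trans (HM x)); rewrite ler_wpM2r // real_ler_norm ?num_real.
Qed.

Lemma has_sup_dual_norm f : is_dual f ->
  has_sup [set `|f x| | x in [set x : X | `|x| <= 1]].
Proof.
move=> df; split; first by exists `|f 0|, 0 => //=; rewrite normr0.
have [M [M0 HM]] := dual_bounded df; exists M => _ [x /= x1 <-].
by apply: (le_trans (HM x)); rewrite -[leRHS]mulr1 ler_wpM2l.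
Qed.

Lemma normr_le_dual_norm f x : is_dual f -> `|x| <= 1 -> `|f x| <= dual_norm f.
Proof.
move=> df x1; have [_ hs] := has_sup_dual_norm df.
by apply: (ub_le_sup hs); exists x.
Qed.

Lemma le_dual_norm f x : is_dual f -> `|x| <= 1 -> f x <= dual_norm f.
Proof.
by move=> df x1; apply: le_trans (normr_le_dual_norm df x1); exact: ler_norm.
Qed.

Lemma dual_norm_ge0 f : is_dual f -> 0 <= dual_norm f.
Proof.
by move=> df; apply: le_trans (normr_le_dual_norm (x := 0) df _); rewrite ?normr0.
Qed.

Lemma dual_norm_le f M : is_dual f -> (forall x, `|x| <= 1 -> `|f x| <= M) ->
  dual_norm f <= M.
Proof.
move=> df HM; apply: ge_sup; first by exists `|f 0|, 0 => //=; rewrite normr0.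
by move=> _ [x /= x1 <-]; exact: HM.
Qed.

Lemma dual_norm_adherent f e : is_dual f -> 0 < e ->
  exists x, `|x| <= 1 /\ dual_norm f - e < f x.
Proof.
move=> df e0; have [_ [x /= x1 <-] lt] := sup_adherent e0 (has_sup_dual_norm df).
have [fx0|fx0] := lerP 0 (f x).
  by exists x; split => //; move: lt; rewrite ger0_norm.
exists (- x); split; first by rewrite normrN.
by move: lt; rewrite ltr0_norm // dualN.
Qed.

Lemma normr_le_dual_normM f x : is_dual f -> `|f x| <= dual_norm f * `|x|.
Proof.
move=> df; have [->|x0] := eqVneq x 0.
  by rewrite (dual0 df) !normr0 mulr0.
have nx : 0 < `|x| by rewrite normr_gt0.
have := normr_le_dual_norm (x := `|x|^-1 *: x) df.
rewrite normrZ normfV normr_id mulVf ?gt_eqF // lexx => /(_ isT).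
by rewrite dualZ // normrM normfV normr_id ler_pdivrMl // mulrC.
Qed.

Lemma dual_norm_eq0 f : is_dual f -> dual_norm f = 0 -> forall x, f x = 0.
Proof.
move=> df n0 x; apply/normr0_eq0/eqP; rewrite eq_le normr_ge0 andbT.
by have := normr_le_dual_normM x df; rewrite n0 mul0r.
Qed.

Lemma dual_comb a f g : is_dual f -> is_dual g -> is_dual (fun x => a * f x + g x).
Proof.
move=> df dg; split; first by move=> b x y; rewrite !dual_linear //; ring.
have [M [M0 HM]] := dual_bounded df; have [K [K0 HK]] := dual_bounded dg.
exists (`|a| * M + K) => x; apply: (le_trans (ler_normD _ _)).
by rewrite mulrDl normrM -mulrA lerD // ler_wpM2l.
Qed.

Lemma dual_cst0 : is_dual (fun _ : X => 0 : R).
Proof. split; first by move=> *; ring. by exists 0 => x; rewrite normr0 mul0r. Qed.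

Lemma dual_scale a f : is_dual f -> is_dual (fun x => a * f x).
Proof.
move=> df; have := dual_comb a df dual_cst0.
by congr is_dual; apply: funext => x; rewrite addr0.
Qed.

Lemma dual_add f g : is_dual f -> is_dual g -> is_dual (fun x => f x + g x).
Proof.
move=> df dg; have := dual_comb 1 df dg.
by congr is_dual; apply: funext => x; rewrite mul1r.
Qed.

Lemma dual_norm_add f g : is_dual f -> is_dual g ->
  dual_norm (fun x => f x + g x) <= dual_norm f + dual_norm g.
Proof.
move=> df dg; apply: dual_norm_le; first exact: dual_add.
move=> x x1; apply: le_trans (ler_normD _ _) _.
by rewrite lerD // normr_le_dual_norm.
Qed.

Lemma dual_norm_scale a f : is_dual f ->
  dual_norm (fun x => a * f x) = `|a| * dual_norm f.
Proof.
move=> df; have daf := dual_scale a df; apply/eqP; rewrite eq_le; apply/andP; split.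
  apply: dual_norm_le => // x x1.
  by rewrite normrM ler_wpM2l // normr_le_dual_norm.
have [->|a0] := eqVneq a 0.
  by rewrite normr0 mul0r; exact: dual_norm_ge0 (dual_scale 0 df).
rewrite -ler_pdivlMl ?normr_gt0 //; apply: dual_norm_le => // x x1.
by rewrite ler_pdivlMl ?normr_gt0 // -normrM (normr_le_dual_norm daf).
Qed.

End DualNorm.

Section Slices.
Variables (R : realType) (X : normedModType R).
Implicit Types (f h : X -> R) (x z : X).

(* Diameters are measured by [sup_(h in dual_ball) (h x - h z)], the bidual
   norm of [x - z]. *)
Definition small_slices f := forall eps : R, 0 < eps -> exists2 d : R, 0 < d &
  forall x z h, `|x| <= 1 -> `|z| <= 1 ->
    dual_norm f - d < f x -> dual_norm f - d < f z -> dual_ball h ->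
    h x - h z <= eps.

Lemma small_slices_dual_norm f : small_slices f ->
  forall eps : R, 0 < eps -> exists2 d : R, 0 < d &
  forall x z h, `|x| <= 1 -> `|z| <= 1 ->
    dual_norm f - d < f x -> dual_norm f - d < f z -> is_dual h ->
    `|h x - h z| <= eps * dual_norm h.
Proof.
move=> Sf eps e0; have [d d0 Hd] := Sf eps e0; exists d => // x z h x1 z1 fx fz dh.
have [n0|nz] := eqVneq (dual_norm h) 0.
  by rewrite n0 mulr0 !(dual_norm_eq0 dh n0) subrr normr0.
have np : 0 < dual_norm h by rewrite lt_def nz dual_norm_ge0.
pose k y := (dual_norm h)^-1 * h y.
have bk : dual_ball k.
  split; first exact: dual_scale.
  by rewrite dual_norm_scale // ger0_norm ?invr_ge0 ?dual_norm_ge0 // mulVf.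
have E : h x - h z = dual_norm h * (k x - k z).
  by rewrite /k -mulrBr mulrA mulfV // mul1r.
rewrite E normrM ger0_norm ?dual_norm_ge0 // mulrC ler_pM2r //.
have := Hd x z k x1 z1 fx fz bk; have := Hd z x k z1 x1 fz fx bk.
by move=> *; apply/ler_normlP; split => //; lra.
Qed.

Lemma small_slices_scale a f : 0 < a -> is_dual f ->
  small_slices f -> small_slices (fun x => a * f x).
Proof.
move=> a0 df Sf eps e0; have [d d0 Hd] := Sf eps e0.
exists (a * d); first exact: mulr_gt0.
rewrite dual_norm_scale // gtr0_norm //.
by move=> x z h x1 z1 fx fz bh; apply: Hd => //; rewrite -(ltr_pM2l a0) mulrBr.
Qed.

(* The one-sided difference quotients of the norm at [f] in directions [t h]
   and [- t h] bound [h x - h z] on slices of depth of order [t]. *)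
Lemma small_slices_of_frechet f : is_dual f -> dual_norm_frechet_at f ->
  small_slices f.
Proof.
move=> df [L [Llin _ Hfr]] eps eps0.
have e4 : 0 < eps / 4 by rewrite divr_gt0.
have [dF dF0 HF] := Hfr _ e4.
pose t := dF / 2; have t0 : 0 < t by rewrite divr_gt0.
have tdF : t < dF by rewrite /t; lra.
exists (eps / 4 * t); first exact: mulr_gt0.
move=> x z h x1 z1 fx fz [dh nh].
pose h1 : X -> R := fun y => t * h y; pose h2 : X -> R := fun y => - t * h y.
have d1 : is_dual h1 by exact: dual_scale.
have d2 : is_dual h2 by exact: dual_scale.
have n1 : dual_norm h1 = t * dual_norm h by rewrite dual_norm_scale // gtr0_norm.
have n2 : dual_norm h2 = t * dual_norm h.
  by rewrite dual_norm_scale // normrN gtr0_norm.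
have tn : t * dual_norm h <= t by rewrite -[leRHS]mulr1 ler_wpM2l // ltW.
have L12 : L h1 + L h2 = 0.
  have h12 : (fun y => 1 * h1 y + h2 y) = (fun y => -1 * h1 y + h1 y).
    by apply: funext => y; rewrite /h1 /h2; ring.
  by have := Llin 1 _ _ d1 d2; rewrite h12 Llin //; lra.
have /ler_normlP [_ H1] := HF h1 d1 ltac:(rewrite n1; lra).
have /ler_normlP [_ H2] := HF h2 d2 ltac:(rewrite n2; lra).
have A1 := le_dual_norm (dual_add df d1) x1.
have A2 := le_dual_norm (dual_add df d2) z1.
rewrite n1 in H1; rewrite n2 in H2; rewrite /h1 /h2 /= in A1 A2.
have P : eps / 4 * (t * dual_norm h) <= eps / 4 * t by rewrite ler_wpM2l // ltW.
rewrite -(ler_pM2l t0) mulrBr; have -> : t * eps = 4 * (eps / 4 * t) by field.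
lra.
Qed.

End Slices.

Section FrechetOfSmallSlices.
Variables (R : realType) (X : normedModType R) (f : X -> R) (xs : nat -> X).
Hypotheses (df : is_dual f) (f_slices : small_slices f).
Hypotheses (xs_ball : forall n, `|xs n| <= 1)
  (xs_norming : forall n, dual_norm f - n.+1%:R^-1 < f (xs n)).
Implicit Types (g h : X -> R).

Lemma norming_in_slice d : 0 < d ->
  exists N, forall n, (N <= n)%N -> dual_norm f - d < f (xs n).
Proof.
move=> d0; have [N] := ltr_add_invr d0; rewrite add0r => HN; exists N => n Nn.
apply: le_lt_trans (xs_norming n); rewrite lerD2l lerN2.
apply: le_trans (ltW HN); rewrite lef_pV2 ?posrE ?ltr0Sn // ler_nat.
exact: leq_trans Nn _.
Qed.

Lemma norming_uniformly_cauchy eps : 0 < eps -> exists N, forall h, is_dual h ->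
  forall n m, (N <= n)%N -> (N <= m)%N ->
  `|h (xs n) - h (xs m)| <= eps * dual_norm h.
Proof.
move=> e0; have [d d0 Hd] := small_slices_dual_norm f_slices e0.
have [N HN] := norming_in_slice d0; exists N => h dh n m Nn Nm.
exact: Hd (HN n Nn) (HN m Nm) dh.
Qed.

Lemma cvg_norming h : is_dual h -> cvg ((fun n => h (xs n)) @ \oo).
Proof.
move=> dh; apply: cauchy_cvg; apply: cauchy_exP => e e0.
have ep : 0 < e / (dual_norm h + 1) by rewrite divr_gt0 // ltr_wpDl ?dual_norm_ge0.
have [N HN] := norming_uniformly_cauchy ep; exists (h (xs N)).
apply: filterS (nbhs_infty_ge N) => n /= Nn; rewrite -ball_normE /ball_ /=.
apply: le_lt_trans (HN h dh N n (leqnn _) Nn) _.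
by rewrite mulrAC ltr_pdivrMr ?ltr_wpDl ?dual_norm_ge0 // mulrDr mulr1 ltrDl.
Qed.

(* The derivative: the weak* limit of the norming sequence in the bidual. *)
Let D h := lim ((fun n => h (xs n)) @ \oo).

Lemma norming_limit_close eps : 0 < eps -> exists N, forall h, is_dual h ->
  forall n, (N <= n)%N -> `|D h - h (xs n)| <= eps * dual_norm h.
Proof.
move=> e0; have [N HN] := norming_uniformly_cauchy e0; exists N => h dh n Nn.
apply/ler_addgt0Pr => e e1.
have [N1 _ HN1] := cvgr_dist_le _ _ (cvg_norming dh) _ e1.
pose m := maxn N N1; have := HN1 m (leq_maxr _ _).
have := HN h dh m n (leq_maxl _ _) Nn.
have := ler_normD (D h - h (xs m)) (h (xs m) - h (xs n)); rewrite addrA subrK.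
lra.
Qed.

Lemma norming_limit_linear a g h : is_dual g -> is_dual h ->
  D (fun x => a * g x + h x) = a * D g + D h.
Proof.
move=> dg dh; rewrite /D.
have -> : (fun n => a * g (xs n) + h (xs n)) =
    (fun n => a * g (xs n)) + (fun n => h (xs n)) by apply: funext.
rewrite limD; [|exact: cvg_norming (dual_scale a dg)|exact: cvg_norming].
have -> : (fun n => a * g (xs n)) = a *: (fun n => g (xs n)) by apply: funext.
by rewrite limZl_tmp //; exact: cvg_norming.
Qed.

Lemma norming_limit_bounded h : is_dual h -> `|D h| <= dual_norm h.
Proof.
move=> dh; apply/ler_addgt0Pr => e e0.
have [N _ HN] := cvgr_dist_le _ _ (cvg_norming dh) _ e0.
have := HN N (leqnn _); have := normr_le_dual_norm dh (xs_ball N).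
have := ler_normD (D h - h (xs N)) (h (xs N)); rewrite subrK; lra.
Qed.

Lemma norming_limit_subgradient h : is_dual h ->
  dual_norm f + D h <= dual_norm (fun x => f x + h x).
Proof.
move=> dh; apply/ler_addgt0Pr => e e0; have e2 : 0 < e / 2 by rewrite divr_gt0.
have [N1 _ HN1] := cvgr_dist_le _ _ (cvg_norming dh) _ e2.
have [N2 HN2] := norming_in_slice e2.
pose n := maxn N1 N2; have := HN1 n (leq_maxl _ _); have := HN2 n (leq_maxr _ _).
have := le_dual_norm (dual_add df dh) (xs_ball n).
by move=> /= A B /ler_normlP [_ C]; rewrite /D; lra.
Qed.

(* A near-maximizer of [f + h] lies in a slice of [f] as soon as [h] is small,
   and on that slice [h] is almost constant. *)
Lemma norming_limit_upper_estimate eps : 0 < eps ->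
  exists2 d, 0 < d & forall h, is_dual h -> dual_norm h < d ->
  dual_norm (fun x => f x + h x) <= dual_norm f + D h + eps * dual_norm h.
Proof.
move=> e0; have e2 : 0 < eps / 2 by rewrite divr_gt0.
have [d d0 Hd] := small_slices_dual_norm f_slices e2.
have [N0 HN0] := norming_limit_close e2.
exists (d / 3); first by rewrite divr_gt0.
move=> h dh nh; apply/ler_addgt0Pr => eta eta0.
pose eta' := Num.min eta (d / 3).
have eta'0 : 0 < eta' by rewrite lt_min eta0 divr_gt0.
have e1 : eta' <= eta by rewrite ge_min lexx.
have e2' : eta' <= d / 3 by rewrite ge_min lexx orbT.
have dfh := dual_add df dh.
have [x [x1 Fx]] := dual_norm_adherent dfh eta'0; rewrite /= in Fx.
have hx := le_dual_norm dh x1; have fx := le_dual_norm df x1.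
have nfh : dual_norm f <= dual_norm (fun x => f x + h x) + dual_norm h.
  have := dual_norm_add dfh (dual_scale (-1) dh).
  rewrite dual_norm_scale // normrN normr1 mul1r.
  by have -> : (fun x => f x + h x + -1 * h x) = f by apply: funext => y; ring.
have [N1 HN1] := norming_in_slice d0.
pose n := maxn N0 N1; have := HN1 n (leq_maxr _ _).
have /ler_normlP [B1 B2] := HN0 h dh n (leq_maxl _ _).
have fxd : dual_norm f - d < f x by lra.
move=> fnd; have /ler_normlP [C1 C2] := Hd _ _ _ x1 (xs_ball n) fxd fnd dh.
have : eps / 2 * dual_norm h <= eps * dual_norm h.
  by rewrite ler_wpM2r ?dual_norm_ge0 //; lra.
lra.
Qed.

Lemma frechet_of_norming_sequence : dual_norm_frechet_at f.
Proof.
exists D; split.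
- by move=> a g h dg dh; exact: norming_limit_linear.
- by exists 1 => h dh; rewrite mul1r; exact: norming_limit_bounded.
- move=> e e0; have [d d0 Hd] := norming_limit_upper_estimate e0.
  exists d => // h dh nh; apply/ler_normlP; split.
  + have := norming_limit_subgradient dh; have := dual_norm_ge0 dh.
    have := mulr_ge0 (ltW e0) (dual_norm_ge0 dh).
    lra.
  + by have := Hd h dh nh; lra.
Qed.

End FrechetOfSmallSlices.

Lemma frechet_of_small_slices (R : realType) (X : normedModType R) (f : X -> R) :
  is_dual f -> small_slices f -> dual_norm_frechet_at f.
Proof.
move=> df Sf.
have /choice [xs Hxs] : forall n : nat,
    exists x : X, `|x| <= 1 /\ dual_norm f - n.+1%:R^-1 < f x.
  by move=> n; apply: dual_norm_adherent; rewrite // invr_gt0 ltr0Sn.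
exact: (@frechet_of_norming_sequence _ _ f xs df Sf (fun n => (Hxs n).1)
  (fun n => (Hxs n).2)).
Qed.

Section MassCounting.
Variable R : realType.

(* Weighting the defects [(1 - a i n) + (1 - b i n)] by [l i / theta n], the
   total is below [1], so some index [i] has total weighted defect below [1]. *)
Lemma convex_comb_component_near_one (m K : nat) (l : 'I_m -> R)
    (a b : 'I_m -> nat -> R) (theta eta : nat -> R) :
  (forall i, 0 <= l i) -> \sum_(i < m) l i = 1 ->
  (forall i n, a i n <= 1) -> (forall i n, b i n <= 1) ->
  (forall n, 0 < theta n) ->
  (forall n, (n < K)%N -> 1 - eta n < \sum_(i < m) l i * a i n) ->
  (forall n, (n < K)%N -> 1 - eta n < \sum_(i < m) l i * b i n) ->
  \sum_(n < K) 2 * eta n / theta n < 1 ->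
  exists i, forall n, (n < K)%N -> 1 - theta n < a i n /\ 1 - theta n < b i n.
Proof.
move=> l0 l1 a1 b1 th0 Ha Hb Hs.
pose defect i n := ((1 - a i n) + (1 - b i n)) / theta n.
have defect_ge0 i n : 0 <= defect i n.
  by apply: divr_ge0; [have := a1 i n; have := b1 i n; lra|exact: ltW].
pose phi i := \sum_(n < K) defect i n.
have E : \sum_(i < m) l i * phi i = \sum_(n < K)
    ((1 - \sum_(i < m) l i * a i n) + (1 - \sum_(i < m) l i * b i n)) / theta n.
  under eq_bigr do rewrite mulr_sumr.
  rewrite exchange_big /=; apply: eq_bigr => n _.
  under eq_bigr do rewrite mulrA.
  rewrite -mulr_suml; congr (_ * _).
  rewrite -[in RHS]l1 -!sumrB -big_split /=; apply: eq_bigr => i _; ring.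
have phi_avg : \sum_(i < m) l i * phi i < 1.
  rewrite E; apply: le_lt_trans Hs; apply: ler_sum => n _.
  rewrite ler_wpM2r ?invr_ge0 ?ltW //.
  by have := Ha n (ltn_ord n); have := Hb n (ltn_ord n); lra.
have [i phi1] : exists i, phi i < 1.
  apply: contrapT => H; move: phi_avg; apply/negP; rewrite -leNgt.
  rewrite -[leLHS]l1; apply: ler_sum => i _; rewrite -[leLHS]mulr1 ler_wpM2l //.
  by rewrite leNgt; apply/negP => Hi; apply: H; exists i.
exists i => n Kn.
have : defect i n <= phi i.
  by rewrite /phi (bigD1 (Ordinal Kn)) //= lerDl; apply: sumr_ge0.
move=> /le_lt_trans /(_ phi1); rewrite ltr_pdivrMr // mul1r.
by have := a1 i n; have := b1 i n; lra.
Qed.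

(* [depth n = 2^-(n+1)] and [sub_depth n = depth n * 2^-(n+2)] make
   [2 * sub_depth n / depth n = 2^-(n+1)], whose partial sums stay below [1]. *)
Definition depth (n : nat) : R := 2^-1 ^+ n.+1.
Definition sub_depth (n : nat) : R := depth n * 2^-1 ^+ n.+2.

Lemma depth_gt0 n : 0 < depth n.
Proof. by rewrite exprn_gt0 // invr_gt0. Qed.

Lemma sub_depth_gt0 n : 0 < sub_depth n.
Proof. by rewrite mulr_gt0 ?depth_gt0 // exprn_gt0 // invr_gt0. Qed.

Lemma sum_sub_depth_lt1 K : \sum_(n < K) 2 * sub_depth n / depth n < 1.
Proof.
have E n : 2 * sub_depth n / depth n = 2^-1 ^+ n.+1.
  rewrite /sub_depth (mulrC (depth n)) mulrA -mulrA mulfV ?gt_eqF ?depth_gt0 //.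
  by rewrite mulr1 exprS mulrA mulfV // mul1r.
have -> : \sum_(n < K) 2 * sub_depth n / depth n = 1 - 2^-1 ^+ K.
  elim: K => [|K IH]; first by rewrite big_ord0 expr0 subrr.
  by rewrite big_ord_recr /= IH E exprS; field.
by rewrite gtrBl exprn_gt0 // invr_gt0.
Qed.

Lemma depth_small d : 0 < d -> exists n, depth n < d.
Proof.
move=> d0; have [k] := ltr_add_invr d0; rewrite add0r => Hk; exists k.
apply: le_lt_trans Hk; rewrite /depth exprVn lef_pV2 ?posrE ?exprn_gt0 ?ltr0Sn //.
by rewrite -natrX ler_nat; apply: ltnW; exact: ltn_expl.
Qed.

End MassCounting.

Lemma cluster_closed (T : topologicalType) (F : set_system T) (C : set T) p :
  closed C -> F C -> cluster F p -> C p.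
Proof.
by move=> /closure_id cC FC; rewrite clusterE cC => clp; exact: clp C FC.
Qed.

Section PointwiseTopology.
Variables (R : realType) (X : normedModType R).

Lemma open_ptws_gt (x : X) (a : R) : open [set p : {ptws X -> R} | a < p x].
Proof.
apply: (@open_comp _ _ (fun p : {ptws X -> R} => p x) [set y | a < y]).
  by move=> p _; exact: (@proj_continuous X (fun _ => R) x).
exact: open_gt.
Qed.

Lemma closed_ptws_ge (x : X) (a : R) : closed [set p : {ptws X -> R} | a <= p x].
Proof.
apply: (@preimage_closed _ _ (fun p : {ptws X -> R} => p x) [set y | a <= y]).
  by move=> p _; exact: (@proj_continuous X (fun _ => R) x).
exact: closed_ge.
Qed.

Lemma nbhs_ptws_slices (g : {ptws X -> R}) (xs zs : nat -> X) (c : nat -> R) K :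
  (forall n, (n < K)%N -> c n < g (xs n) /\ c n < g (zs n)) ->
  nbhs g [set p : {ptws X -> R} |
    forall n, (n < K)%N -> c n < p (xs n) /\ c n < p (zs n)].
Proof.
move=> gK; have gK' : \forall p \near g, forall i : 'I_K,
    c i < p (xs i) /\ c i < p (zs i).
  apply: (@filter_forall _ _ _ (nbhs g) _) => i; have [gx gz] := gK i (ltn_ord i).
  by apply: filterI; apply: open_nbhs_nbhs; split => //; exact: open_ptws_gt.
near=> p => n Kn; exact: (near gK' p) (Ordinal Kn).
Unshelve. all: by end_near.
Qed.

End PointwiseTopology.

Section NormingSet.
Variables (R : realType) (X : normedModType R) (Lam : set (X -> R)).
Hypotheses (Lam_ball : Lam `<=` @dual_ball R X)
  (Lam_compact : @compact {ptws X -> R} Lam)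
  (Lam_hull_dense :
    @dual_ball R X `<=` @closure {ptws X -> R} (conv_hull Lam)).

Lemma Lam_le1 q x : Lam q -> `|x| <= 1 -> q x <= 1.
Proof.
by move=> /Lam_ball [dq nq] x1; exact: le_trans (le_dual_norm dq x1) nq.
Qed.

Section CommonSlices.
Variables (g : X -> R) (xs zs : nat -> X).
Hypotheses (g_ball : dual_ball g) (xs_ball : forall n, `|xs n| <= 1)
  (zs_ball : forall n, `|zs n| <= 1)
  (g_slices : forall n,
    1 - sub_depth R n < g (xs n) /\ 1 - sub_depth R n < g (zs n)).

Lemma Lam_meets_slices K : exists q, Lam q /\
  forall n, (n < K)%N -> 1 - depth R n < q (xs n) /\ 1 - depth R n < q (zs n).
Proof.
have [_ [[m [l [gs [l0 [l1 [Lgs ->]]]]]] Up]] :=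
  Lam_hull_dense g_ball (nbhs_ptws_slices (c := fun n => 1 - sub_depth R n)
                                           (K := K) (fun n _ => g_slices n)).
have [i Hi] := convex_comb_component_near_one
  (a := fun i n => gs i (xs n)) (b := fun i n => gs i (zs n)) l0 l1
  (fun i n => Lam_le1 (Lgs i) (xs_ball n)) (fun i n => Lam_le1 (Lgs i) (zs_ball n))
  (@depth_gt0 R) (fun n Kn => (Up n Kn).1) (fun n Kn => (Up n Kn).2)
  (sum_sub_depth_lt1 R K).
by exists (gs i); split.
Qed.

Lemma Lam_cluster_in_slices : exists2 p, Lam p &
  forall n, 1 - depth R n <= p (xs n) /\ 1 - depth R n <= p (zs n).
Proof.
have [q Hq] := choice Lam_meets_slices.
have [p [Lp clp]] : Lam `&` @cluster {ptws X -> R} (q @ \oo) !=set0.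
  by apply: Lam_compact; apply: filterS (nbhs_infty_ge 0) => K _; exact: (Hq K).1.
exists p => // n; split.
- apply: (cluster_closed (@closed_ptws_ge _ _ (xs n) (1 - depth R n)) _ clp).
  by apply: filterS (nbhs_infty_ge n.+1) => K nK; exact/ltW/((Hq K).2 n nK).1.
- apply: (cluster_closed (@closed_ptws_ge _ _ (zs n) (1 - depth R n)) _ clp).
  by apply: filterS (nbhs_infty_ge n.+1) => K nK; exact/ltW/((Hq K).2 n nK).2.
Qed.

End CommonSlices.

Hypothesis Lam_frechet : forall f, Lam f -> dual_sphere f -> dual_norm_frechet_at f.

Lemma small_slices_of_norming_set (g : X -> R) : is_dual g -> dual_norm g = 1 ->
  small_slices g.
Proof.
move=> dg ng eps e0; apply: contrapT => not_small.
have bad n : exists w : X * X * (X -> R),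
    (`|w.1.1| <= 1 /\ `|w.1.2| <= 1) /\
    (1 - sub_depth R n < g w.1.1 /\ 1 - sub_depth R n < g w.1.2) /\
    (dual_ball w.2 /\ eps < w.2 w.1.1 - w.2 w.1.2).
  apply: contrapT => Hn; apply: not_small; exists (sub_depth R n).
    exact: sub_depth_gt0.
  move=> x z h x1 z1 gx gz bh; rewrite ng in gx gz.
  by rewrite leNgt; apply/negP => lt; apply: Hn; exists (x, z, h).
have [w Hw] := choice bad.
have g_ball : dual_ball g by split; rewrite ?ng.
have [p Lp /= Hp] := Lam_cluster_in_slices g_ball
  (fun n => (Hw n).1.1) (fun n => (Hw n).1.2) (fun n => (Hw n).2.1).
have [dp np] := Lam_ball Lp.
have np1 : dual_norm p = 1.
  apply/eqP; rewrite eq_le np /=; apply/ler_addgt0Pr => d d0.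
  have [n Hn] := depth_small d0; have [[x1 _] _] := Hw n.
  by have := le_dual_norm dp x1; have := (Hp n).1; lra.
have [d d0 Hd] := small_slices_of_frechet dp (Lam_frechet Lp (conj dp np1)) e0.
have [n Hn] := depth_small d0; have [[x1 z1] [_ [bh spread]]] := Hw n.
have [px pz] := Hp n.
have px_slice : dual_norm p - d < p (w n).1.1 by rewrite np1; lra.
have pz_slice : dual_norm p - d < p (w n).1.2 by rewrite np1; lra.
by have := Hd _ _ _ x1 z1 px_slice pz_slice bh; lra.
Qed.

End NormingSet.

Theorem lemma3p1 (R : realType) (X : completeNormedModType R)
  (Lam : set (X -> R)) :
  Lam `<=` @dual_ball R X ->
  wstar_compact Lam ->
  wstar_closure (conv_hull Lam) = @dual_ball R X ->
  (forall f, Lam f -> @dual_sphere R X f -> dual_norm_frechet_at f) ->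
  @dual_frechet_smooth R X.
Proof.
move=> Lam_ball [_ Lam_compact] hull_closure Lam_frechet f df f_neq0.
have hull_dense : @dual_ball R X `<=` @closure {ptws X -> R} (conv_hull Lam).
  by rewrite -hull_closure => g [].
have nf_gt0 : 0 < dual_norm f.
  rewrite lt_def dual_norm_ge0 // andbT; apply/eqP => nf0; apply: f_neq0.
  by apply: funext; exact: dual_norm_eq0.
pose g x := (dual_norm f)^-1 * f x.
have ng : dual_norm g = 1.
  by rewrite dual_norm_scale // gtr0_norm ?invr_gt0 // mulVf ?gt_eqF.
have g_slices := small_slices_of_norming_set Lam_ball Lam_compact hull_dense
  Lam_frechet (dual_scale _ df) ng.
apply: (frechet_of_small_slices df).
have -> : f = fun x => dual_norm f * g x.
  by apply: funext => x; rewrite /g mulrA mulfV ?gt_eqF // mul1r.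
exact: small_slices_scale (dual_scale _ df) g_slices.
Qed.
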